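(* Let $A=((((N(A_1)\setminus N(A_2))\cup N(A_3))\setminus N(A_4))\cdots)$ be a drawable set witnessed by $A_1,\dots,A_n\subseteq\mathbb{R}^2$, and let $\mathrm{SN}$ denote the stationary number with respect to this witness. Let $S,T\subseteq\mathbb{R}^2$ be nonempty sets such that $S$ encircles $T$ and for every pair $(x,y)\in S\times T$ exactly one of $x,y$ lies in $A$. Then $\max_{x\in S}\mathrm{SN}(x)>\max_{y\in T}\mathrm{SN}(y)$.
   Context: For $X\subseteq\mathbb{R}^2$ let $N(X)=\{x\in\mathbb{R}^2: |x-a|<1 \text{ for some } a\in X\}$. A set $A$ is drawable, witnessed by $A_1,\dots,A_n$, if $A=D_n$ where $D_1=N(A_1)$, $D_k=D_{k-1}\cup N(A_k)$ for odd $k\ge 3$ and $D_k=D_{k-1}\setminus N(A_k)$ for even $k$. For $x\in\mathbb{R}^2$ the stationary number is $\mathrm{SN}(x)=\min\{k \text{ odd}: x\in N(A_k) \text{ and } x\notin N(A_{k'}) \text{ for all even } k'>k\}$ if $x\in A$, and $\mathrm{SN}(x)=\min\{k \text{ even}: x\in N(A_k) \text{ and } x\notin N(A_{k'}) \text{ for all odd } k'>k\}$ if $x\notin A$. A set $S$ encircles a set $T$ if for every $x\in\mathbb{R}^2$, if the open unit disk $B(x,1)$ satisfies $B(x,1)\cap S=\emptyset$ then $B(x,1)\cap T=\emptyset$. *)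

From Stdlib Require Import Reals Lra Lia ClassicalEpsilon.
Open Scope R_scope.

Definition point : Type := (R * R)%type.
Definition pset : Type := point -> Prop.

Definition dist2 (x a : point) : R :=
  sqrt ((fst x - fst a)^2 + (snd x - snd a)^2).

Definition Nbhd (X : pset) : pset := fun x => exists a, X a /\ dist2 x a < 1.

Definition ball1 (x : point) : pset := fun z => dist2 z x < 1.

(* D_k for a witness A_1, A_2, ... (A indexed by nat, A 0 unused).
   D_0 = empty, so D_1 = N(A_1); odd k >= 3: union; even k: difference. *)
Fixpoint Dset (A : nat -> pset) (k : nat) : pset :=
  match k with
  | O => fun _ => False
  | S k' => if Nat.even (S k')
            then fun x => Dset A k' x /\ ~ Nbhd (A (S k')) x
            else fun x => Dset A k' x \/ Nbhd (A (S k')) x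
  end.

Definition drawn (A : nat -> pset) (n : nat) : pset := Dset A n.

Definition SN_cond (A : nat -> pset) (n : nat) (x : point) (k : nat) : Prop :=
  (1 <= k <= n)%nat /\
  (drawn A n x ->
     Nat.odd k = true /\ Nbhd (A k) x /\
     forall k', (k < k' <= n)%nat -> Nat.even k' = true -> ~ Nbhd (A k') x) /\
  (~ drawn A n x ->
     Nat.even k = true /\ Nbhd (A k) x /\
     forall k', (k < k' <= n)%nat -> Nat.odd k' = true -> ~ Nbhd (A k') x).

Fixpoint search (P : nat -> Prop) (k fuel : nat) : nat :=
  match fuel with
  | O => O
  | S f => if excluded_middle_informative (P k) then k else search P (S k) f
  end.

Definition SN (A : nat -> pset) (n : nat) (x : point) : nat :=
  search (SN_cond A n x) 0 (S n).

Definition is_max (X : pset) (f : point -> nat) (m : nat) : Prop :=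
  (exists x, X x /\ f x = m) /\ (forall x, X x -> (f x <= m)%nat).

Definition encircles (S T : pset) : Prop :=
  forall x, (forall s, S s -> ~ ball1 x s) -> (forall t, T t -> ~ ball1 x t).

(* Let y maximise SN over T and put l = SN(y), so y lies in N(A_l).  Since S
   encircles T, the disk around the centre a in A_l witnessing this also meets
   S at some s, hence s lies in N(A_l) as well.  Exactly one of s, y is drawn,
   so SN(s) and l have opposite parities; as s is still in N(A_l), SN(s) cannot
   lie below l, nor equal it, so l < SN(s) <= max_S SN.  When y lies in no
   N(A_j) at all, SN(y) = 0, y is not drawn, and every drawn s has SN(s) >= 1. *)

From Stdlib Require Import Arith Lia Classical ClassicalEpsilon.

Lemma search_correct (P : nat -> Prop) f k :
  (exists i, (k <= i < k + f)%nat /\ P i) -> P (search P k f).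
Proof.
  revert k; induction f as [|f IH]; intros k [i [Hi Pi]]; simpl; [lia|].
  destruct (excluded_middle_informative (P k)) as [Pk|nPk]; [exact Pk|].
  apply IH; exists i; split; [|exact Pi].
  assert (i <> k) by (intros ->; contradiction). lia.
Qed.

Lemma search_default (P : nat -> Prop) f k :
  (forall i, ~ P i) -> search P k f = 0%nat.
Proof.
  revert k; induction f as [|f IH]; intros k nP; simpl; [reflexivity|].
  destruct (excluded_middle_informative (P k)) as [Pk|_]; [contradiction (nP k)|].
  exact (IH _ nP).
Qed.

Lemma search_lt (P : nat -> Prop) f k :
  search P k f = 0%nat \/ (search P k f < k + f)%nat.
Proof.
  revert k; induction f as [|f IH]; intros k; simpl; [now left|].
  destruct (excluded_middle_informative (P k)); [right; lia|].
  destruct (IH (S k)); [left|right]; lia.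
Qed.

Lemma greatest_witness_le (P : nat -> Prop) n j : P j -> (j <= n)%nat ->
  exists j', P j' /\ (j <= j' <= n)%nat /\ forall i, (j' < i <= n)%nat -> ~ P i.
Proof.
  induction n as [|n IH]; intros Pj Hjn.
  - exists j; repeat split; [exact Pj | lia | lia | intros; lia].
  - destruct (classic (P (S n))) as [Pn|nPn].
    + exists (S n); repeat split; [exact Pn | lia | lia | intros; lia].
    + assert (Hjn' : (j <= n)%nat) by (destruct (Nat.eq_dec j (S n)); subst; [contradiction | lia]).
      destruct (IH Pj Hjn') as [j' [Pj' [Hj' Hmax]]].
      exists j'; repeat split; [exact Pj' | lia | lia |].
      intros i Hi; destruct (Nat.eq_dec i (S n)) as [->|]; [exact nPn | apply Hmax; lia].
Qed.

Lemma is_max_exists (X : pset) (f : point -> nat) b :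
  (exists x, X x) -> (forall x, X x -> (f x <= b)%nat) -> exists m, is_max X f m.
Proof.
  intros [x0 Hx0]; induction b as [|b IH]; intros Hb.
  - exists 0%nat; split; [exists x0; split; [exact Hx0 | specialize (Hb x0 Hx0); lia] | exact Hb].
  - destruct (classic (exists x, X x /\ f x = S b)) as [Hattained|Hnot].
    + exists (S b); split; [exact Hattained | exact Hb].
    + apply IH; intros x Hx; specialize (Hb x Hx).
      assert (f x <> S b) by (intro; apply Hnot; exists x; auto). lia.
Qed.

Lemma Dset_S_not_Nbhd A m x :
  ~ Nbhd (A (S m)) x -> (Dset A (S m) x <-> Dset A m x).
Proof. intros nN; cbn [Dset]; destruct (Nat.even (S m)); tauto. Qed.

Lemma Dset_S_Nbhd A m x :
  Nbhd (A (S m)) x -> (Dset A (S m) x <-> Nat.odd (S m) = true).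
Proof.
  intros N; cbn [Dset]; rewrite <- Nat.negb_even.
  destruct (Nat.even (S m)); simpl; split; (discriminate || tauto).
Qed.

Lemma Dset_stable A x m j : (j <= m)%nat ->
  (forall i, (j < i <= m)%nat -> ~ Nbhd (A i) x) -> (Dset A m x <-> Dset A j x).
Proof.
  induction m as [|m IH]; intros Hjm Hout.
  - replace j with 0%nat by lia; tauto.
  - destruct (Nat.eq_dec j (S m)) as [->|]; [tauto|].
    rewrite Dset_S_not_Nbhd by (apply Hout; lia).
    apply IH; [lia | intros i Hi; apply Hout; lia].
Qed.

Lemma Dset_Nbhd A m x : Dset A m x -> exists j, (1 <= j <= m)%nat /\ Nbhd (A j) x.
Proof.
  induction m as [|m IH]; intros D; [contradiction|].
  destruct (classic (Nbhd (A (S m)) x)) as [N|nN].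
  - exists (S m); split; [lia | exact N].
  - rewrite Dset_S_not_Nbhd in D by exact nN.
    destruct (IH D) as [j [Hj N]]; exists j; split; [lia | exact N].
Qed.

Lemma drawn_iff_odd_last A n x j : (1 <= j <= n)%nat -> Nbhd (A j) x ->
  (forall i, (j < i <= n)%nat -> ~ Nbhd (A i) x) -> (drawn A n x <-> Nat.odd j = true).
Proof.
  intros Hj N Hlast; unfold drawn.
  rewrite (Dset_stable A x n j) by (lia || exact Hlast).
  destruct j as [|j]; [lia|]. exact (Dset_S_Nbhd A j x N).
Qed.

Lemma SN_cond_iff A n x k :
  SN_cond A n x k <->
  (1 <= k <= n)%nat /\ Nbhd (A k) x /\ (drawn A n x <-> Nat.odd k = true) /\
  forall k', (k < k' <= n)%nat -> Nat.odd k' <> Nat.odd k -> ~ Nbhd (A k') x.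
Proof.
  unfold SN_cond; setoid_rewrite <- Nat.negb_odd.
  destruct (classic (drawn A n x)) as [D|nD]; destruct (Nat.odd k); simpl;
    split; intros H; intuition (try discriminate).
  (* What is left are the exclusion clauses, where "opposite parity to k" is
     phrased through [negb] on one side and through [<>] on the other. *)
  all: match goal with
       | Hk : forall k', _ -> _ -> Nbhd (_ k') _ -> False, N : Nbhd (_ ?i) _ |- False =>
           apply (Hk i); [lia | destruct (Nat.odd i); simpl in *; intuition congruence | exact N]
       end.
Qed.

Lemma SN_le A n x : (SN A n x <= n)%nat.
Proof. unfold SN; destruct (search_lt (SN_cond A n x) (S n) 0); lia. Qed.

Lemma SN_cond_SN A n x j : (1 <= j <= n)%nat -> Nbhd (A j) x -> SN_cond A n x (SN A n x).
Proof.
  intros Hj N.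
  destruct (greatest_witness_le (fun i => Nbhd (A i) x) n j N ltac:(lia))
    as [k [Nk [Hk Hlast]]].
  assert (Wk : SN_cond A n x k).
  { apply SN_cond_iff; split; [lia | split; [exact Nk | split]].
    - apply drawn_iff_odd_last; [lia | exact Nk | exact Hlast].
    - intros k' Hk' _; exact (Hlast k' Hk'). }
  unfold SN; apply search_correct; exists k; split; [lia | exact Wk].
Qed.

Lemma SN_eq0 A n x : (forall j, (1 <= j <= n)%nat -> ~ Nbhd (A j) x) -> SN A n x = 0%nat.
Proof.
  intros Hout; unfold SN; apply search_default; intros k Wk.
  apply SN_cond_iff in Wk as [Hk [Nk _]]; exact (Hout k Hk Nk).
Qed.

Lemma encircles_Nbhd (S T X : pset) y :
  encircles S T -> T y -> Nbhd X y -> exists s, S s /\ Nbhd X s.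
Proof.
  intros Henc Ty [a [Xa Hya]].
  apply NNPP; intros Hno.
  refine (Henc a _ y Ty Hya).
  intros s Ss Hsa; apply Hno; exists s; split; [exact Ss | exists a; split; assumption].
Qed.

Lemma SN_cond_lt A n s y k l :
  SN_cond A n s k -> SN_cond A n y l -> (drawn A n s <-> ~ drawn A n y) ->
  Nbhd (A l) s -> (l < k)%nat.
Proof.
  rewrite !SN_cond_iff; intros [Hk [_ [Ds Hexcl]]] [Hl [_ [Dy _]]] Hxor Nl.
  assert (Hpar : Nat.odd l <> Nat.odd k) by (intros E; rewrite E in Dy; tauto).
  destruct (Nat.lt_trichotomy l k) as [|[->|Hkl]]; [assumption | contradiction |].
  exfalso; exact (Hexcl l ltac:(lia) Hpar Nl).
Qed.

Theorem lemma3p3 (A : nat -> pset) (n : nat) (S T : pset) :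
  (1 <= n)%nat ->
  (exists s, S s) -> (exists t, T t) ->
  encircles S T ->
  (forall x y, S x -> T y ->
     (drawn A n x /\ ~ drawn A n y) \/ (~ drawn A n x /\ drawn A n y)) ->
  exists mS mT, is_max S (SN A n) mS /\ is_max T (SN A n) mT /\ (mT < mS)%nat.
Proof.
  intros _ [s0 Ss0] [t0 Tt0] Henc Hxor.
  destruct (is_max_exists S (SN A n) n (ex_intro _ s0 Ss0) (fun x _ => SN_le A n x)) as [mS HmS].
  destruct (is_max_exists T (SN A n) n (ex_intro _ t0 Tt0) (fun x _ => SN_le A n x)) as [mT HmT].
  exists mS, mT; split; [exact HmS|]; split; [exact HmT|].
  destruct HmT as [[y [Ty <-]] _], HmS as [_ HmS].
  destruct (classic (exists j, (1 <= j <= n)%nat /\ Nbhd (A j) y)) as [[j [Hj Nj]]|Hout].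
  - pose proof (SN_cond_SN A n y j Hj Nj) as Wy.
    pose proof Wy as [Hl [Nl _]]%SN_cond_iff.
    destruct (encircles_Nbhd S T _ y Henc Ty Nl) as [s [Ss Ns]].
    apply Nat.lt_le_trans with (SN A n s); [|exact (HmS s Ss)].
    apply (SN_cond_lt A n s y); [exact (SN_cond_SN A n s _ Hl Ns) | exact Wy | | exact Ns].
    specialize (Hxor s y Ss Ty); tauto.
  - rewrite SN_eq0 by (intros j Hj Nj; apply Hout; now exists j).
    assert (nDy : ~ drawn A n y) by (intros Dy; exact (Hout (Dset_Nbhd A n y Dy))).
    destruct (Hxor s0 y Ss0 Ty) as [[Ds0 _]|[_ Dy]]; [|contradiction].
    destruct (Dset_Nbhd A n s0 Ds0) as [j [Hj Nj]].
    pose proof (SN_cond_SN A n s0 j Hj Nj) as [Hk _]%SN_cond_iff.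
    apply Nat.lt_le_trans with (SN A n s0); [lia | exact (HmS s0 Ss0)].
Qed.
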